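(* Let $p\ne q$ be primes, $G=\mathbb{Z}_p^2\times\mathbb{Z}_q^2$, and let $S\subseteq G$ be spectral with $\gcd(|S|,p^2q^2)=pq$ and $pq<|S|<pq\min\{p,q\}$. Then there exist nonzero $u\in\mathbb{Z}_p^2$ and nonzero $v\in\mathbb{Z}_q^2$ such that $\lambda u\notin S-S$ for every $\lambda\in\mathbb{Z}_p\setminus\{0\}$ and $\mu v\notin S-S$ for every $\mu\in\mathbb{Z}_q\setminus\{0\}$.
   Context: $\mathbb{Z}_p^2$ and $\mathbb{Z}_q^2$ are regarded as subgroups of $G$ (elements $(u,0)$ and $(0,v)$). For $w=(u,v)\in G$ define $\chi_w(a,b)=\exp\big(2\pi i(\tfrac{u\cdot a}{p}+\tfrac{v\cdot b}{q})\big)$ and $\chi(S)=\sum_{s\in S}\chi(s)$. $S$ is spectral if there is $\Lambda\subseteq G$ with $|\Lambda|=|S|$ and $\chi_{\lambda-\lambda'}(S)=0$ for all distinct $\lambda,\lambda'\in\Lambda$. *)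

From HB Require Import structures.
From mathcomp Require Import all_boot all_order all_algebra.
From mathcomp Require Import algC.
Set Implicit Arguments. Unset Strict Implicit. Unset Printing Implicit Defensive.
Import Order.TTheory GRing.Theory Num.Theory.
Local Open Scope ring_scope.

(* zeta n = exp(2 pi i / n) in algC: n.-root (-1) is the n-th root of -1
   with minimal nonnegative argument, i.e. exp(i pi / n). *)
Definition zeta (n : nat) : algC := (n.-root (-1)) ^+ 2.

Notation Gpq p q := (('Z_p * 'Z_p) * ('Z_q * 'Z_q))%type.

Definition dot2 (n : nat) (u a : 'Z_n * 'Z_n) : 'Z_n := u.1 * a.1 + u.2 * a.2.

Definition chi (p q : nat) (w x : Gpq p q) : algC :=
  zeta p ^+ (nat_of_ord (dot2 w.1 x.1)) * zeta q ^+ (nat_of_ord (dot2 w.2 x.2)).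

Definition chiS (p q : nat) (w : Gpq p q) (S : {set Gpq p q}) : algC :=
  \sum_(s in S) chi w s.

Definition spectral (p q : nat) (S : {set Gpq p q}) : Prop :=
  exists Lambda : {set Gpq p q}, #|Lambda| = #|S| /\
    forall l l', l \in Lambda -> l' \in Lambda -> l != l' -> chiS (l - l') S = 0.

Definition diffset (p q : nat) (S : {set Gpq p q}) : {set Gpq p q} :=
  [set z : Gpq p q | [exists x in S, exists y in S, z == x - y]].

Definition inP (p q : nat) (u : 'Z_p * 'Z_p) : Gpq p q := (u, 0).
Definition inQ (p q : nat) (v : 'Z_q * 'Z_q) : Gpq p q := (0, v).

Definition scal2 (n : nat) (l : 'Z_n) (u : 'Z_n * 'Z_n) : 'Z_n * 'Z_n :=
  (l * u.1, l * u.2).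

From mathcomp Require Import all_boot all_order all_algebra.
From mathcomp Require Import algC algnum ring.
Set Implicit Arguments. Unset Strict Implicit. Unset Printing Implicit Defensive.
Import Order.TTheory GRing.Theory Num.Theory.
Local Open Scope ring_scope.

(** Let L be a spectrum of S.  Since #|L| = #|S|, the matrix (chi_l(s)) over
    L x S has orthogonal rows, so it is invertible and its columns are
    orthogonal as well: the sum of chi_l(z) over l in L vanishes for every
    nonzero z in S - S.  Project L to Z_p^2.  If the sums of e(l.1 . w / p)
    over l in L vanished for all nonzero w, Fourier inversion would give
    p^2 | #|L| = #|S|, which the gcd hypothesis forbids.  So the sum is nonzero
    at some u <> 0, and the Galois automorphism zeta_p |-> zeta_p^lam of
    Q(zeta_p) shows that it is nonzero at every lam u as well; hence no lam u
    lies in S - S.  The same argument works for q. *)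

Lemma zeta_expn n : (0 < n)%N -> zeta n ^+ n = 1.
Proof. by move=> n_gt0; rewrite /zeta -exprM mulnC exprM rootCK // sqrrN expr1n. Qed.

Lemma zeta_neq1 n : (1 < n)%N -> zeta n != 1.
Proof.
move=> n_gt1; have n_gt0 := ltnW n_gt1; set r := n.-root (-1 : algC).
rewrite /zeta -/r; apply/eqP=> r2_eq1.
have /eqP : (r - 1) * (r + 1) = 0 by rewrite -subr_sqr r2_eq1 expr1n subrr.
rewrite mulf_eq0 subr_eq0 addr_eq0 => /orP[/eqP r1 | /eqP rN1].
  have /eqP := rootCK n_gt0 (-1 : algC); rewrite -/r r1 expr1n.
  by rewrite -subr_eq0 opprK -(natrD _ 1 1) pnatr_eq0.
by have := rootC_lt0 (-1 : algC) n_gt1; rewrite -/r rN1 ltrN10.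
Qed.

Section Dot2.

Variable n : nat.
Implicit Types u w a b : 'Z_n * 'Z_n.

Lemma dot2Dl u w a : dot2 (u + w) a = dot2 u a + dot2 w a.
Proof. by rewrite /dot2 /=; ring. Qed.

Lemma dot2Dr u a b : dot2 u (a + b) = dot2 u a + dot2 u b.
Proof. by rewrite /dot2 /=; ring. Qed.

Lemma dot2Nl u a : dot2 (- u) a = dot2 u (- a).
Proof. by rewrite /dot2 /=; ring. Qed.

Lemma dot2_0l a : dot2 0 a = 0.
Proof. by rewrite /dot2 /=; ring. Qed.

Lemma dot2_0r u : dot2 u 0 = 0.
Proof. by rewrite /dot2 /=; ring. Qed.

Lemma dot2_scal2r u w (lam : 'Z_n) : dot2 u (scal2 lam w) = lam * dot2 u w.
Proof. by rewrite /dot2 /=; ring. Qed.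

End Dot2.

Section AdditiveCharacter.

Variable n : nat.
Hypothesis n_prime : prime n.

Let n_gt1 : (1 < n)%N := prime_gt1 n_prime.

Definition addchar (a : 'Z_n) : algC := zeta n ^+ a.

Let zeta_exp_modulus : zeta n ^+ (Zp_trunc n).+2 = 1.
Proof. by rewrite (Zp_cast n_gt1) (zeta_expn (ltnW n_gt1)). Qed.

Lemma addchar0 : addchar 0 = 1.
Proof. exact: expr0. Qed.

Lemma addcharD (a b : 'Z_n) : addchar (a + b) = addchar a * addchar b.
Proof. by rewrite /addchar -exprD -[RHS](expr_mod _ zeta_exp_modulus). Qed.

Lemma addcharM (a b : 'Z_n) : addchar (a * b) = addchar a ^+ b.
Proof. by rewrite /addchar -exprM -[RHS](expr_mod _ zeta_exp_modulus). Qed.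

Lemma unitZp_prime (c : 'Z_n) : c != 0 -> c \is a GRing.unit.
Proof.
move=> c_neq0; rewrite -(natr_Zp c) unitZpE // prime_coprime //.
have c_gt0 : (0 < c)%N by move: c_neq0; rewrite lt0n -val_eqE.
by apply/negP=> /(dvdn_leq c_gt0); rewrite leqNgt -{2}(Zp_cast n_gt1) ltn_ord.
Qed.

Lemma sum_addcharM (c : 'Z_n) :
  \sum_(x : 'Z_n) addchar (c * x) = if c == 0 then n%:R else 0.
Proof.
have [-> | c_neq0] := eqVneq c 0.
  under eq_bigr do rewrite mul0r addchar0.
  by rewrite sumr_const card_ord Zp_cast.
transitivity (\sum_(x : 'Z_n) addchar x).
  by symmetry; apply: reindex_inj; apply: mulrI; apply: unitZp_prime.
have /eqP : (zeta n - 1) * \sum_(i < (Zp_trunc n).+2) zeta n ^+ i = 0.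
  by rewrite -subrX1 zeta_exp_modulus subrr.
rewrite mulf_eq0 subr_eq0 (negbTE (zeta_neq1 n_gt1)) /= => /eqP; exact.
Qed.

Lemma sum_addchar_dot2 (u : 'Z_n * 'Z_n) :
  \sum_(w : 'Z_n * 'Z_n) addchar (dot2 u w) = if u == 0 then (n ^ 2)%:R else 0.
Proof.
transitivity (\sum_(i : 'Z_n) \sum_(j : 'Z_n) addchar (u.1 * i) * addchar (u.2 * j)).
  by rewrite pair_bigA; apply: eq_bigr => -[i j] _; rewrite addcharD.
under eq_bigr do rewrite -mulr_sumr.
rewrite -mulr_suml !sum_addcharM; case: u => a b /=; rewrite xpair_eqE.
by case: eqP; case: eqP; rewrite ?mulr0 ?mul0r // -natrM mulnn.
Qed.

Lemma scal2_eq0 (lam : 'Z_n) w : lam != 0 -> (scal2 lam w == 0) = (w == 0).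
Proof.
move=> /unitZp_prime/mulrI lam_reg.
by case: w => a b; rewrite /scal2 /= !xpair_eqE !mulrI_eq0.
Qed.

Lemma sum_addcharM_eq0 (I : finType) (P : pred I) (a : I -> 'Z_n) (lam : 'Z_n) :
  lam != 0 -> \sum_(i | P i) addchar (lam * a i) = 0 ->
  \sum_(i | P i) addchar (a i) = 0.
Proof.
move=> lam_neq0 sum0; have lam_unit := unitZp_prime lam_neq0.
have coprime_inv : coprime lam^-1 n by rewrite coprime_sym -unitZpE // natr_Zp unitrV.
have [sigma sigmaE] := Qn_aut_exists coprime_inv.
have := congr1 sigma sum0; rewrite rmorph0 rmorph_sum => sigma_sum0.
apply: etrans sigma_sum0; apply: eq_bigr => i _; rewrite sigmaE; last first.
  by rewrite /addchar exprAC (zeta_expn (ltnW n_gt1)) expr1n.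
by rewrite -addcharM mulrC mulrA mulVr // mul1r.
Qed.

Lemma card_of_vanishing_fourier (T : finType) (L : {set T}) (f : T -> 'Z_n * 'Z_n) :
  (forall w, w != 0 -> \sum_(l in L) addchar (dot2 (f l) w) = 0) ->
  #|L| = (n ^ 2 * #|[set l in L | f l == 0%R]|)%N.
Proof.
move=> vanish.
have /eqP : \sum_(w : 'Z_n * 'Z_n) \sum_(l in L) addchar (dot2 (f l) w) = #|L|%:R.
  rewrite (bigD1 (0 : 'Z_n * 'Z_n)) //= [X in _ + X]big1 ?addr0; last exact: vanish.
  under eq_bigr do rewrite dot2_0r addchar0.
  by rewrite sumr_const.
rewrite exchange_big /=.
under eq_bigr do rewrite sum_addchar_dot2.
rewrite -big_mkcondr sumr_const -mulrnA eqr_nat => /eqP <-.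
by congr (_ * _)%N; apply: eq_card => l; rewrite inE.
Qed.

Lemma exists_line_nonvanishing (T : finType) (L : {set T}) (f : T -> 'Z_n * 'Z_n) :
  ~~ (n ^ 2 %| #|L|)%N ->
  exists2 u, u != 0 & forall lam, lam != 0 ->
    \sum_(l in L) addchar (dot2 (f l) (scal2 lam u)) != 0.
Proof.
move=> ndvd.
have [u /andP[u_neq0 sum_neq0] | vanish] :=
  pickP [pred u | (u != 0) && (\sum_(l in L) addchar (dot2 (f l) u) != 0)].
  exists u => // lam lam_neq0; apply: contra sum_neq0.
  under eq_bigr do rewrite dot2_scal2r.
  by move/eqP/sum_addcharM_eq0 => /(_ lam_neq0) ->.
case/negP: ndvd; rewrite (card_of_vanishing_fourier (f := f)); first exact/dvdn_mulr/dvdnn.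
by move=> w w_neq0; apply/eqP; have := vanish w; rewrite /= w_neq0 => /negbFE.
Qed.

End AdditiveCharacter.

Lemma mulmx1C_cast (R : comPzRingType) m n (A : 'M[R]_(m, n)) (B : 'M_(n, m)) :
  m = n -> A *m B = 1%:M -> B *m A = 1%:M.
Proof. by move=> eq_mn; case: n / eq_mn in A B *; apply: mulmx1C. Qed.

Lemma orthogonal_cols_of_rows (R : numFieldType) (I J : finType)
    (L : {set I}) (S : {set J}) (c d : I -> J -> R) :
  #|L| = #|S| ->
  {in L &, forall l l',
     \sum_(s in S) c l s * d l' s = if l == l' then #|S|%:R else 0} ->
  {in S &, forall s s', s != s' -> \sum_(l in L) d l s * c l s' = 0}.
Proof.
move=> cardL rows s s' sS s'S s_neq_s'.
pose A : 'M[R]_(#|L|, #|S|) := \matrix_(i, j) c (enum_val i) (enum_val j).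
pose B : 'M[R]_(#|S|, #|L|) := \matrix_(j, i) d (enum_val i) (enum_val j).
have S_neq0 : #|S|%:R != 0 :> R by rewrite pnatr_eq0 -lt0n; apply/card_gt0P; exists s.
have AB : (#|S|%:R^-1 *: A) *m B = 1%:M.
  apply/matrixP=> i i'; rewrite -scalemxAl !mxE.
  under eq_bigr do rewrite !mxE.
  rewrite -(big_enum_val (fun s => c (enum_val i) s * d (enum_val i') s)).
  rewrite rows ?enum_valP // (inj_eq enum_val_inj).
  by case: eqP => _; rewrite ?mulr0 ?mulVf.
have /matrixP/(_ (enum_rank_in sS s) (enum_rank_in sS s')) := mulmx1C_cast cardL AB.
rewrite -scalemxAr !mxE.
have -> : (enum_rank_in sS s == enum_rank_in sS s') = false.
  by apply: contraNF s_neq_s' => /eqP/enum_rank_in_inj ->.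
move/eqP; rewrite mulf_eq0 invr_eq0 (negbTE S_neq0) /= => /eqP sum0.
rewrite big_enum_val -[RHS]sum0; apply: eq_bigr => i _.
by rewrite !mxE !enum_rankK_in.
Qed.

Lemma sq_ndvd_of_gcd p q k m : (0 < p)%N -> ~~ (p %| q)%N ->
  gcdn m (p ^ 2 * k) = (p * q)%N -> ~~ (p ^ 2 %| m)%N.
Proof.
move=> p_gt0 p_ndvd_q gcd_m; apply: contra p_ndvd_q => sq_dvd_m.
have : (p ^ 2 %| p * q)%N by rewrite -gcd_m dvdn_gcd sq_dvd_m dvdn_mulr.
by rewrite expnS expn1 dvdn_pmul2l.
Qed.

Section CharactersOfG.

Variables p q : nat.
Hypotheses (p_prime : prime p) (q_prime : prime q).
Implicit Types w x : Gpq p q.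

Lemma chiE w x : chi w x = addchar (dot2 w.1 x.1) * addchar (dot2 w.2 x.2).
Proof. by []. Qed.

Lemma chiDl w w' x : chi (w + w') x = chi w x * chi w' x.
Proof. by rewrite !chiE !dot2Dl !addcharD // mulrACA. Qed.

Lemma chiDr w x x' : chi w (x + x') = chi w x * chi w x'.
Proof. by rewrite !chiE !dot2Dr !addcharD // mulrACA. Qed.

Lemma chiNl w x : chi (- w) x = chi w (- x).
Proof. by rewrite !chiE !dot2Nl. Qed.

Lemma chi0l x : chi 0 x = 1.
Proof. by rewrite chiE !dot2_0l !addchar0 mulr1. Qed.

Lemma chi_inP w (u : 'Z_p * 'Z_p) : chi w (inP q u) = addchar (dot2 w.1 u).
Proof. by rewrite chiE dot2_0r addchar0 mulr1. Qed.

Lemma chi_inQ w (v : 'Z_q * 'Z_q) : chi w (inQ p v) = addchar (dot2 w.2 v).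
Proof. by rewrite chiE dot2_0r addchar0 mul1r. Qed.

Lemma inP_eq0 (u : 'Z_p * 'Z_p) : (inP q u == 0) = (u == 0).
Proof. by rewrite /inP -pair_eqE /= eqxx andbT. Qed.

Lemma inQ_eq0 (v : 'Z_q * 'Z_q) : (inQ p v == 0) = (v == 0).
Proof. by rewrite /inQ -pair_eqE. Qed.

Lemma spectrum_annihilates_diffset (S : {set Gpq p q}) : spectral S ->
  exists2 L : {set Gpq p q}, #|L| = #|S| &
    forall z, z != 0 -> z \in diffset S -> \sum_(l in L) chi l z = 0.
Proof.
case=> L [cardL orthL]; exists L => // z z_neq0.
rewrite inE => /exists_inP[x xS /exists_inP[y yS /eqP z_def]].
have y_neq_x : y != x by apply: contraNneq z_neq0 => yx; rewrite z_def yx subrr.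
have rows : {in L &, forall l l', \sum_(s in S) chi l s * chi (- l') s =
                                  if l == l' then #|S|%:R else 0}.
  move=> l l' lL l'L; under eq_bigr do rewrite -chiDl.
  have [<- | l_neq_l'] := eqVneq l l'; last exact: orthL.
  by under eq_bigr do rewrite subrr chi0l; rewrite sumr_const.
rewrite z_def; under eq_bigr do rewrite addrC chiDr -chiNl.
exact: (orthogonal_cols_of_rows cardL rows yS xS y_neq_x).
Qed.

End CharactersOfG.

Theorem lemma4p5 (p q : nat) (S : {set Gpq p q}) :
  prime p -> prime q -> p != q ->
  spectral S ->
  gcdn #|S| (p ^ 2 * q ^ 2) = (p * q)%N ->
  (p * q < #|S|)%N -> (#|S| < p * q * minn p q)%N ->
  exists u : 'Z_p * 'Z_p, exists v : 'Z_q * 'Z_q,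
    [/\ u != 0, v != 0,
        (forall lam : 'Z_p, lam != 0 -> inP q (scal2 lam u) \notin diffset S) &
        (forall mu : 'Z_q, mu != 0 -> inQ p (scal2 mu v) \notin diffset S)].
Proof.
move=> p_prime q_prime p_neq_q spS gcdS _ _.
have [L cardL sum_chi0] := spectrum_annihilates_diffset p_prime q_prime spS.
have ndvd_p : ~~ (p ^ 2 %| #|L|)%N.
  by rewrite cardL (sq_ndvd_of_gcd _ _ gcdS) ?prime_gt0 ?dvdn_prime2.
have ndvd_q : ~~ (q ^ 2 %| #|L|)%N.
  have gcdS' : gcdn #|S| (q ^ 2 * p ^ 2) = (q * p)%N by rewrite mulnC [(q * p)%N]mulnC.
  by rewrite cardL (sq_ndvd_of_gcd _ _ gcdS') ?prime_gt0 ?dvdn_prime2 // eq_sym.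
have [u u_neq0 sum_u] := exists_line_nonvanishing p_prime (fun l : Gpq p q => l.1) ndvd_p.
have [v v_neq0 sum_v] := exists_line_nonvanishing q_prime (fun l : Gpq p q => l.2) ndvd_q.
exists u, v; split=> // [lam lam_neq0 | mu mu_neq0]; apply/negP => in_diff.
- case/negP: (sum_u _ lam_neq0); apply/eqP.
  rewrite -[RHS](sum_chi0 _ _ in_diff) ?inP_eq0 ?scal2_eq0 //.
  by apply: eq_bigr => l _; rewrite chi_inP.
- case/negP: (sum_v _ mu_neq0); apply/eqP.
  rewrite -[RHS](sum_chi0 _ _ in_diff) ?inQ_eq0 ?scal2_eq0 //.
  by apply: eq_bigr => l _; rewrite chi_inQ.
Qed.
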